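(* Consider a distributed storage system $\mathrm{DSS}(n,k,d,h,\alpha,\alpha',\beta,M)$ with $1\le k\le d\le n-1$, $h\ge 0$. Then in its information flow graph there exist a sequence of $k$ failures/repairs and a data collector whose minimum $S$–$\mathrm{DC}$ cut has capacity at most $$\sum_{i=0}^{k-1}\min\{\alpha,\,(d+h-i)\beta\}.$$ Consequently, if every data collector can reconstruct the file of size $M$ under all failure/repair sequences, then $\sum_{i=0}^{k-1}\min\{\alpha,(d+h-i)\beta\}\ge M$.
   Context: $\mathrm{DSS}(n,k,d,h,\alpha,\alpha',\beta,M)$: a file of $M$ packets is stored on $n$ complete storage nodes of capacity $\alpha$ each so that any $k$ of them reconstruct the file; in addition there are $h$ repairing storage nodes of capacity $\alpha'<\alpha$, which receive data from the source, never fail and are never contacted by data collectors. When a complete node fails, a new node is created receiving $\beta$ packets from each of $d$ surviving complete nodes and from each of the $h$ repairing nodes. Information flow graph: source $S$; each complete node $x$ is a pair $x_{in}\to x_{out}$ with capacity $\alpha$, initial nodes have edges $S\to x_{in}$; each repairing node $r$ is a pair $r_{in}\to r_{out}$ with capacity $\alpha'$ and edge $S\to r_{in}$; at each repair the new node $y$ gets edges of capacity $\beta$ from $x_{out}$ of the $d$ chosen active complete nodes and from $r_{out}$ of all $h$ repairing nodes; a data collector has infinite-capacity edges from the out-vertices of some $k$ active complete nodes. *)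

From mathcomp Require Import all_boot.
Set Implicit Arguments. Unset Strict Implicit. Unset Printing Implicit Defensive.

(* Complete storage nodes are numbered: initial nodes 0..n-1, the node created
   at repair step t (t = 0,1,...) gets number n + t. *)
Inductive vertex : Type :=
| Src
| Dc
| CIn  of nat
| COut of nat
| RIn  of nat
| ROut of nat.

(* An edge: tail, head, capacity; capacity None = infinite. *)
Definition edge := (vertex * vertex * option nat)%type.

(* A failure/repair step: (failed complete node, list of the d helper
   complete nodes). *)
Definition step := (nat * seq nat)%type.

(* Run a sequence of failures/repairs starting from the set of active complete
   nodes [act], where the next new node gets number [next]. *)
Fixpoint run (d : nat) (act : seq nat) (next : nat) (s : seq step) : option (seq nat) :=
  match s with
  | [::] => Some act
  | (f, hs) :: s' =>
      if [&& f \in act, uniq hs, size hs == d, f \notin hs & all (mem act) hs]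
      then run d (next :: rem f act) next.+1 s'
      else None
  end.

Fixpoint repair_edges (h alpha beta next : nat) (s : seq step) : seq edge :=
  match s with
  | [::] => [::]
  | (_, hs) :: s' =>
      (CIn next, COut next, Some alpha)
      :: [seq (COut x, CIn next, Some beta) | x <- hs]
      ++ [seq (ROut r, CIn next, Some beta) | r <- iota 0 h]
      ++ repair_edges h alpha beta next.+1 s'
  end.

Definition flow_graph (n h alpha alpha' beta : nat) (s : seq step) (dc : seq nat)
  : seq edge :=
  [seq (Src, CIn x, None) | x <- iota 0 n]
  ++ [seq (CIn x, COut x, Some alpha) | x <- iota 0 n]
  ++ [seq (Src, RIn r, None) | r <- iota 0 h]
  ++ [seq (RIn r, ROut r, Some alpha') | r <- iota 0 h]
  ++ repair_edges h alpha beta n s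
  ++ [seq (COut x, Dc, None) | x <- dc].

Definition valid_scenario (n k d : nat) (s : seq step) (dc : seq nat) : Prop :=
  exists act, run d (iota 0 n) n s = Some act
              /\ uniq dc /\ size dc = k /\ all (mem act) dc.

(* An S-DC cut is given by the side [C] containing the source (C Src = true,
   C Dc = false). *)
Definition is_cut (C : vertex -> bool) : Prop := C Src = true /\ C Dc = false.

Fixpoint cut_capacity (C : vertex -> bool) (es : seq edge) : option nat :=
  match es with
  | [::] => Some 0
  | (u, v, c) :: es' =>
      if C u && ~~ C v then
        match c, cut_capacity C es' with
        | Some a, Some b => Some (a + b)
        | _, _ => None
        end
      else cut_capacity C es'
  end.

Definition cut_bound (k d h alpha beta : nat) : nat :=
  \sum_(i < k) minn alpha ((d + h - i) * beta).

(* Fail the initial nodes 0, ..., k-1 one after the other; the i-th newcomer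
   n + i downloads from the i newcomers created before it and from the d - i
   initial nodes i+1, ..., d, which are still untouched because d <= n - 1.
   Put on the source side the source, all repairing nodes, all initial nodes,
   and the in-vertex of newcomer n + i exactly when alpha <= (d + h - i) beta.
   Then newcomer n + i contributes either its storage edge (capacity alpha) or
   its d - i + h download edges from the source side (capacity (d + h - i)
   beta), whichever is smaller; every other edge stays on one side.  A data
   collector attached to the k newcomers thus faces a cut of exactly the bound,
   and any file it can reconstruct is no larger. *)
From mathcomp Require Import all_boot zify.

Definition capacity_add (a b : option nat) : option nat :=
  if a is Some x then if b is Some y then Some (x + y) else None else None.

Lemma cut_capacity_cat C (es es' : seq edge) :
  cut_capacity C (es ++ es') =
  capacity_add (cut_capacity C es) (cut_capacity C es').
Proof.
elim: es => [|[[u v] c] es IH] /=; first by case: (cut_capacity C es').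
case: (C u && ~~ C v); rewrite IH //.
case: c (cut_capacity C es) (cut_capacity C es') => [c|] [x|] [y|] //=.
by rewrite addnA.
Qed.

Lemma cut_capacity_uncrossed C (es : seq edge) :
  all (fun e : edge => C e.1.1 ==> C e.1.2) es -> cut_capacity C es = Some 0.
Proof.
elim: es => [|[[u v] c] es IH] //= /andP[/implyP uv /IH ->].
by case: (C u) uv => // ->.
Qed.

Lemma cut_capacity_map_in C (T : Type) (tail : T -> vertex) v b (s : seq T) :
  cut_capacity C [seq (tail x, v, Some b) | x <- s] =
  Some (if C v then 0 else b * count (fun x => C (tail x)) s).
Proof.
elim: s => [|x s IH] /=; first by case: (C v); rewrite ?muln0.
rewrite IH; case: (C v) (C (tail x)) => [] [] //=.
by rewrite mulnDr muln1.
Qed.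

Lemma cut_capacity_edge C u v c :
  cut_capacity C [:: (u, v, Some c)] = Some (if C u && ~~ C v then c else 0).
Proof. by rewrite /=; case: (C u && ~~ C v); rewrite ?addn0. Qed.

Lemma repair_edges_cons h alpha beta next (st : step) (s : seq step) :
  repair_edges h alpha beta next (st :: s) =
  repair_edges h alpha beta next [:: st] ++ repair_edges h alpha beta next.+1 s.
Proof. by case: st => f hs; rewrite /= cats0 -!catA. Qed.

Section BottleneckScenario.
Variables (n d h alpha beta : nat).
Hypothesis d_lt_n : d <= n - 1.

Definition repair_step (i : nat) : step := (i, iota n i ++ iota i.+1 (d - i)).

Definition repair_seq (m : nat) : seq step := map repair_step (iota 0 m).

Definition repair_cost (i : nat) : nat := minn alpha ((d + h - i) * beta).

Definition storage_cheaper (i : nat) : bool := alpha <= (d + h - i) * beta.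

Definition bottleneck_cut (v : vertex) : bool :=
  match v with
  | Src | RIn _ | ROut _ => true
  | Dc => false
  | CIn x => (x < n) || storage_cheaper (x - n)
  | COut x => x < n
  end.

Lemma run_repair_steps m j act : j + m <= d -> uniq act ->
  act =i [pred x | (n <= x < n + j) || (j <= x < n)] ->
  exists2 act', run d act (n + j) (map repair_step (iota j m)) = Some act' &
    act' =i [pred x | (n <= x < n + j + m) || (j + m <= x < n)].
Proof.
elim: m j act => [|m IH] j act jm act_uniq act_def.
  by exists act => // x; rewrite act_def !inE !addn0.
have step_ok : [&& j \in act, uniq (repair_step j).2,
    size (repair_step j).2 == d, j \notin (repair_step j).2
    & all (mem act) (repair_step j).2].
  apply/and5P; split.
  - by rewrite act_def inE; lia.
  - rewrite cat_uniq !iota_uniq andbT; apply/hasPn => x.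
    by rewrite !mem_iota; lia.
  - by rewrite size_cat !size_iota; apply/eqP; lia.
  - by rewrite mem_cat !mem_iota; lia.
  - by apply/allP => x; rewrite mem_cat !mem_iota /= act_def inE; lia.
rewrite /= step_ok -addnS.
have [|||act' run_act' act'_def] := IH j.+1 (n + j :: rem j act).
- by lia.
- by rewrite /= rem_uniq // andbT (mem_rem_uniq _ act_uniq) inE act_def inE; lia.
- move=> x; rewrite in_cons (mem_rem_uniq _ act_uniq) !inE act_def inE; lia.
by exists act' => // x; rewrite act'_def !inE; lia.
Qed.

Lemma repair_seq_valid k : k <= d ->
  valid_scenario n k d (repair_seq k) (iota n k).
Proof.
move=> kd; have [|||act run_act act_def] := @run_repair_steps k 0 (iota 0 n).
- by lia.
- exact: iota_uniq.
- by move=> x; rewrite mem_iota !inE; lia.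
exists act; rewrite addn0 in run_act; split=> //.
split; first exact: iota_uniq.
split; first by rewrite size_iota.
by apply/allP => x; rewrite mem_iota /= act_def !inE; lia.
Qed.

Lemma repair_step_capacity j : j < d ->
  cut_capacity bottleneck_cut (repair_edges h alpha beta (n + j) [:: repair_step j])
  = Some (repair_cost j).
Proof.
move=> jd.
have newcomer_in : bottleneck_cut (CIn (n + j)) = storage_cheaper j.
  by rewrite /= addKn; case: ltnP => //; lia.
have newcomer_out : bottleneck_cut (COut (n + j)) = false by rewrite /=; lia.
rewrite [repair_edges _ _ _ _ _]/= cats0 -cat1s !cut_capacity_cat.
rewrite cut_capacity_edge !cut_capacity_map_in newcomer_in newcomer_out.
rewrite /storage_cheaper /repair_cost; case: (leqP alpha) => [cheap|dear] /=.
  by rewrite !addn0.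
have -> : count (fun x => x < n) (iota n j ++ iota j.+1 (d - j)) = d - j.
  rewrite count_cat (@eq_in_count _ _ pred0) ?count_pred0; last first.
    by move=> x; rewrite mem_iota /=; lia.
  rewrite (@eq_in_count _ _ predT) ?count_predT ?size_iota // => x.
  by rewrite mem_iota /=; lia.
rewrite (@eq_count _ _ predT) // count_predT size_iota.
by rewrite add0n -mulnDr mulnC; congr (Some (_ * _)); lia.
Qed.

Lemma repair_edges_capacity m j : j + m <= d ->
  cut_capacity bottleneck_cut
    (repair_edges h alpha beta (n + j) (map repair_step (iota j m)))
  = Some (\sum_(i <- iota j m) repair_cost i).
Proof.
elim: m j => [|m IH] j jm; first by rewrite big_nil.
rewrite [map _ _]/= repair_edges_cons cut_capacity_cat repair_step_capacity; last by lia.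
by rewrite -addnS IH ?addSnnS // big_cons.
Qed.

Lemma bottleneck_cut_capacity alpha' k : k <= d ->
  cut_capacity bottleneck_cut
    (flow_graph n h alpha alpha' beta (repair_seq k) (iota n k))
  = Some (cut_bound k d h alpha beta).
Proof.
move=> kd; have := @repair_edges_capacity k 0; rewrite addn0 => repair_cap.
rewrite /flow_graph !cut_capacity_cat repair_cap // !cut_capacity_uncrossed ?all_map.
- by rewrite /= /cut_bound -(big_mkord xpredT repair_cost) /index_iota subn0 !add0n addn0.
all: by apply/allP => x; rewrite ?mem_iota /=; lia.
Qed.

End BottleneckScenario.

Theorem proposition2 (n k d h alpha alpha' beta M : nat) :
  1 <= k -> k <= d -> d <= n - 1 -> alpha' < alpha ->
  (exists (s : seq step) (dc : seq nat),
      size s = k /\ valid_scenario n k d s dc /\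
      exists C c, is_cut C /\
        cut_capacity C (flow_graph n h alpha alpha' beta s dc) = Some c /\
        c <= cut_bound k d h alpha beta)
  /\
  ((forall (s : seq step) (dc : seq nat), valid_scenario n k d s dc ->
      forall C c, is_cut C ->
        cut_capacity C (flow_graph n h alpha alpha' beta s dc) = Some c ->
        M <= c) ->
   M <= cut_bound k d h alpha beta).
Proof.
move=> _ kd dn _.
have valid := repair_seq_valid n d dn k kd.
have capacity := bottleneck_cut_capacity n d h alpha beta dn alpha' k kd.
have cut : is_cut (bottleneck_cut n d h alpha beta) by [].
split; last by move=> reconstruct; exact: reconstruct valid _ _ cut capacity.
exists (repair_seq n d k), (iota n k).
split; first by rewrite size_map size_iota.
by split=> //; exists (bottleneck_cut n d h alpha beta), (cut_bound k d h alpha beta).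
Qed.
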